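(* Let $N\ge 2$, $a\in\mathbb{R}^N$ with all $a_i\neq 0$, $\underline x<\overline x$, $\underline y<\overline y$ in $\mathbb{R}^N$, and $\mathcal{S}_a=\{(x,y)\in\mathbb{R}^N\times\mathbb{R}^N: \sum_{i=1}^N a_ix_iy_i=0,\ \underline x\le x\le\overline x,\ \underline y\le y\le\overline y\}$. Let $(x,y)$ be an extreme point of $\mathcal{S}_a$ and let $i\neq j$. Then either both $x_i\in\{\underline x_i,\overline x_i\}$ and $y_i\in\{\underline y_i,\overline y_i\}$, or both $x_j\in\{\underline x_j,\overline x_j\}$ and $y_j\in\{\underline y_j,\overline y_j\}$. *)

(* R^N is rendered as 'rV[R]_N for an arbitrary real field R
   (the statement is purely order-algebraic, so this generalizes R = reals). *)
From HB Require Import structures.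
From mathcomp Require Import all_boot all_order all_algebra.
Set Implicit Arguments. Unset Strict Implicit. Unset Printing Implicit Defensive.
Import Order.TTheory GRing.Theory Num.Theory.
Local Open Scope ring_scope.

Definition extreme_point (R : realFieldType) (N : nat)
    (S : 'rV[R]_N * 'rV[R]_N -> Prop) (p : 'rV[R]_N * 'rV[R]_N) : Prop :=
  S p /\
  forall (q r : 'rV[R]_N * 'rV[R]_N) (t : R),
    S q -> S r -> 0 < t < 1 ->
    p.1 = t *: q.1 + (1 - t) *: r.1 ->
    p.2 = t *: q.2 + (1 - t) *: r.2 ->
    q = r.

Definition S_a (R : realFieldType) (N : nat) (a xl xu yl yu : 'rV[R]_N)
    (p : 'rV[R]_N * 'rV[R]_N) : Prop :=
  \sum_(i < N) a 0 i * p.1 0 i * p.2 0 i = 0 /\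
  (forall i : 'I_N, xl 0 i <= p.1 0 i <= xu 0 i) /\
  (forall i : 'I_N, yl 0 i <= p.2 0 i <= yu 0 i).

From HB Require Import structures.
From mathcomp Require Import all_boot all_order all_algebra.
From mathcomp Require Import ring lra.
Import Order.TTheory GRing.Theory Num.Theory.
Local Open Scope ring_scope.

(* Suppose neither index i nor j is a corner of its box, so each has a
   coordinate strictly inside its interval.  Moving only that one coordinate
   at each index changes sum_l a_l x_l y_l linearly, so some nonzero
   combination of the two moves keeps the constraint; being small and
   symmetric, it exhibits (x, y) as the midpoint of two distinct points of
   S_a, contradicting extremality. *)

Lemma nontrivial_kernel2 {R : fieldType} (c d : R) :
  exists s t : R, (s != 0) || (t != 0) /\ s * c + t * d = 0.
Proof.
have [/andP[c0 d0] | cd_neq0] := boolP ((c == 0) && (d == 0)).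
  by exists 1, 0; rewrite oner_neq0 (eqP c0) (eqP d0); split => //; ring.
exists d, (- c); rewrite oppr_eq0; split; last by ring.
by move: cd_neq0; rewrite negb_and orbC.
Qed.

Section BoxConstraints.

Set Implicit Arguments.
Unset Strict Implicit.

Variable R : realFieldType.

Definition at_bound (lo u hi : R) : bool :=
  (u == lo) || (u == hi).

Definition box_corner (xl x xu yl y yu : R) : bool :=
  at_bound xl x xu && at_bound yl y yu.

Lemma at_boundP (lo u hi : R) :
  reflect (u = lo \/ u = hi) (at_bound lo u hi).
Proof. exact: orPP eqP eqP. Qed.

Lemma box_cornerP (xl x xu yl y yu : R) :
  reflect ((x = xl \/ x = xu) /\ (y = yl \/ y = yu))
          (box_corner xl x xu yl y yu).
Proof. exact: (andPP (at_boundP _ _ _) (at_boundP _ _ _)). Qed.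

Lemma interior_of_not_at_bound (lo u hi : R) :
  lo <= u <= hi -> ~~ at_bound lo u hi -> lo < u < hi.
Proof.
move=> /andP[lo_u u_hi]; rewrite negb_or => /andP[u_neq_lo u_neq_hi].
by rewrite !lt_neqAle lo_u u_hi u_neq_hi eq_sym u_neq_lo.
Qed.

Lemma interior_not_box_corner (xl x xu yl y yu : R) :
  xl <= x <= xu -> yl <= y <= yu -> ~~ box_corner xl x xu yl y yu ->
  exists b : bool, if b then xl < x < xu else yl < y < yu.
Proof.
move=> x_in y_in; rewrite negb_and => /orP[x_free | y_free].
  by exists true; apply: interior_of_not_at_bound.
by exists false; apply: interior_of_not_at_bound.
Qed.

Lemma interior_shift (lo u hi c : R) :
  lo < u < hi ->
  exists2 eps, 0 < eps & forall e, `|e| <= eps -> lo <= u + e * c <= hi.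
Proof.
move=> /andP[lo_u u_hi].
set m := Num.min (u - lo) (hi - u).
have m_gt0 : 0 < m by rewrite lt_min !subr_gt0 lo_u u_hi.
have m_le_lo : m <= u - lo by rewrite ge_min lexx.
have m_le_hi : m <= hi - u by rewrite ge_min lexx orbT.
have c1_gt0 : 0 < `|c| + 1 by rewrite ltr_wpDl.
exists (m / (`|c| + 1)); first by rewrite divr_gt0.
move=> e e_small.
have : `|e * c| <= m.
  rewrite normrM -[leRHS](mulfVK (lt0r_neq0 c1_gt0)).
  apply: (le_trans (ler_wpM2r (normr_ge0 _) e_small)).
  by rewrite ler_wpM2l ?lerDl // divr_ge0 // ltW.
by rewrite ler_norml => /andP[? ?]; apply/andP; split; lra.
Qed.

Lemma free_coord_shift (b : bool) (xl x xu yl y yu c : R) :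
  (if b then xl < x < xu else yl < y < yu) ->
  exists2 eps, 0 < eps & forall e, `|e| <= eps ->
    if b then xl <= x + e * c <= xu else yl <= y + e * c <= yu.
Proof. by case: b => int_b; apply: interior_shift. Qed.

Lemma extreme_point_sym_shift (N : nat)
    (S : 'rV[R]_N * 'rV[R]_N -> Prop) (x y dx dy : 'rV[R]_N) :
  extreme_point S (x, y) -> S (x + dx, y + dy) -> S (x - dx, y - dy) ->
  dx = 0 /\ dy = 0.
Proof.
move=> [_ ext] S_plus S_minus.
have half : (0 : R) < (2 : R)^-1 < 1 by apply/andP; split; lra.
have mid (v d : 'rV[R]_N) : v = 2^-1 *: (v + d) + (1 - 2^-1) *: (v - d).
  by apply/rowP => l; rewrite !mxE; lra.
have [/rowP eq_x /rowP eq_y] :=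
  ext _ _ _ S_plus S_minus half (mid _ _) (mid _ _).
split; apply/rowP => l.
  by have := eq_x l; rewrite !mxE; lra.
by have := eq_y l; rewrite !mxE; lra.
Qed.

Section CoordinateShift.

Variable N : nat.

(* Only one factor of each [x_l * y_l] moves, so the bilinear constraint
   changes linearly. *)
Definition coord_shift (b : 'I_N -> bool) (u : 'I_N -> R) :
    'rV[R]_N * 'rV[R]_N :=
  (\row_l (if b l then u l else 0), \row_l (if b l then 0 else u l)).

Lemma coord_shift_eq0 b u l : coord_shift b u = (0, 0) -> u l = 0.
Proof.
case=> /rowP/(_ l) + /rowP/(_ l); rewrite !mxE.
by case: (b l) => [-> | _ ->].
Qed.

Lemma S_a_coord_shift (a xl xu yl yu x y : 'rV[R]_N) b u (e : R) :
  S_a a xl xu yl yu (x, y) ->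
  \sum_l u l * (a 0 l * (if b l then y 0 l else x 0 l)) = 0 ->
  (forall l, if b l then xl 0 l <= x 0 l + e * u l <= xu 0 l
             else yl 0 l <= y 0 l + e * u l <= yu 0 l) ->
  S_a a xl xu yl yu
    (x + e *: (coord_shift b u).1, y + e *: (coord_shift b u).2).
Proof.
move=> [sum0 [x_in y_in]] lin0 shift_in; split; [|split] => /=.
- transitivity (\sum_l a 0 l * x 0 l * y 0 l
                + e * \sum_l u l * (a 0 l * (if b l then y 0 l else x 0 l))).
    rewrite mulr_sumr -big_split; apply: eq_bigr => l _ /=.
    by rewrite !mxE; case: (b l); ring.
  by rewrite sum0 lin0 mulr0 addr0.
- move=> l; have := shift_in l; rewrite !mxE.
  by case: (b l) => // _; rewrite mulr0 addr0 x_in.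
- move=> l; have := shift_in l; rewrite !mxE.
  by case: (b l) => // _; rewrite mulr0 addr0 y_in.
Qed.

End CoordinateShift.

Definition pair_shift (N : nat) (i j : 'I_N) (bi bj : bool) (s t : R) :=
  coord_shift (fun l => if l == i then bi else bj)
              (fun l => if l == i then s else if l == j then t else 0).

Lemma S_a_pair_shift (N : nat) (a xl xu yl yu x y : 'rV[R]_N) (i j : 'I_N)
    (bi bj : bool) (s t : R) :
  S_a a xl xu yl yu (x, y) -> i != j ->
  (if bi then xl 0 i < x 0 i < xu 0 i else yl 0 i < y 0 i < yu 0 i) ->
  (if bj then xl 0 j < x 0 j < xu 0 j else yl 0 j < y 0 j < yu 0 j) ->
  s * (a 0 i * (if bi then y 0 i else x 0 i)) +
  t * (a 0 j * (if bj then y 0 j else x 0 j)) = 0 ->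
  exists2 eps, 0 < eps & forall e, `|e| <= eps ->
    S_a a xl xu yl yu
      (x + e *: (pair_shift i j bi bj s t).1,
       y + e *: (pair_shift i j bi bj s t).2).
Proof.
move=> S_xy neq_ij int_i int_j lin; have [_ [/= x_in /= y_in]] := S_xy.
have neq_ji : (j == i) = false by rewrite eq_sym; apply/negbTE.
have [ei ei_gt0 shift_i] := free_coord_shift s int_i.
have [ej ej_gt0 shift_j] := free_coord_shift t int_j.
exists (Num.min ei ej) => [|e e_small]; first by rewrite lt_min ei_gt0 ej_gt0.
apply: S_a_coord_shift S_xy _ _ => [|l].
  rewrite (bigD1 i) // (bigD1 j) /= ?neq_ji // !eqxx big1 ?addr0 // => l.
  by case/andP=> /negbTE-> /negbTE->; rewrite mul0r.
have [-> | _] := eqVneq l i.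
  by apply: shift_i; apply: le_trans e_small _; rewrite ge_min lexx.
have [-> | _] := eqVneq l j.
  by apply: shift_j; apply: le_trans e_small _; rewrite ge_min lexx orbT.
by case: (bj); rewrite mulr0 addr0 ?x_in ?y_in.
Qed.

Lemma extreme_point_S_a_corner (N : nat)
    (a xl xu yl yu x y : 'rV[R]_N) (i j : 'I_N) :
  extreme_point (S_a a xl xu yl yu) (x, y) -> i != j ->
  box_corner (xl 0 i) (x 0 i) (xu 0 i) (yl 0 i) (y 0 i) (yu 0 i) ||
  box_corner (xl 0 j) (x 0 j) (xu 0 j) (yl 0 j) (y 0 j) (yu 0 j).
Proof.
move=> ext neq_ij; have [[_ [/= x_in /= y_in]] _] := ext.
apply/contraT; rewrite negb_or => /andP[free_i free_j].
have [bi int_i] := interior_not_box_corner (x_in i) (y_in i) free_i.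
have [bj int_j] := interior_not_box_corner (x_in j) (y_in j) free_j.
have [s [t [st_neq0 lin]]] := nontrivial_kernel2
  (a 0 i * (if bi then y 0 i else x 0 i))
  (a 0 j * (if bj then y 0 j else x 0 j)).
have [eps eps_gt0 S_shift] := S_a_pair_shift ext.1 neq_ij int_i int_j lin.
have eps_small : `|eps| <= eps by rewrite ger0_norm // ltW.
have := S_shift (- eps); rewrite normrN !scaleNr => /(_ eps_small) S_minus.
have [/eqP dx0 /eqP dy0] :=
  extreme_point_sym_shift ext (S_shift eps eps_small) S_minus.
have shift0 : pair_shift i j bi bj s t = (0, 0).
  move: dx0 dy0; rewrite !scaler_eq0 (gt_eqF eps_gt0) !orFb.
  move=> /eqP dx0 /eqP dy0.
  by rewrite [pair_shift _ _ _ _ _ _]surjective_pairing dx0 dy0.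
have := coord_shift_eq0 i shift0; rewrite eqxx => s0.
have := coord_shift_eq0 j shift0; rewrite eq_sym (negbTE neq_ij) eqxx => t0.
by rewrite s0 t0 eqxx in st_neq0.
Qed.

End BoxConstraints.

Theorem corollary1 (R : realFieldType) (N : nat) (hN : (2 <= N)%N)
    (a xl xu yl yu : 'rV[R]_N)
    (ha : forall i : 'I_N, a 0 i != 0)
    (hx : forall i : 'I_N, xl 0 i < xu 0 i)
    (hy : forall i : 'I_N, yl 0 i < yu 0 i)
    (x y : 'rV[R]_N)
    (hext : extreme_point (S_a a xl xu yl yu) (x, y))
    (i j : 'I_N) (hij : i != j) :
  ((x 0 i = xl 0 i \/ x 0 i = xu 0 i) /\ (y 0 i = yl 0 i \/ y 0 i = yu 0 i)) \/
  ((x 0 j = xl 0 j \/ x 0 j = xu 0 j) /\ (y 0 j = yl 0 j \/ y 0 j = yu 0 j)).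
Proof.
have /orP[/box_cornerP corner_i | /box_cornerP corner_j] :=
  extreme_point_S_a_corner hext hij.
- by left.
- by right.
Qed.
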